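(* Let $\mathcal{X}=\{1,\dots,n\}$, let $\pi$ be a strictly positive probability distribution on $\mathcal{X}$, let $P$ be a $\pi$-reversible transition matrix, and fix $\alpha\in(0,1)$. For $S\subset\mathcal{X}$ with $S\neq\emptyset,\mathcal{X}$, let $G_S$ be the Gibbs kernel induced by the partition $\mathcal{X}=S\sqcup S'$ and $A_\alpha(S)=\alpha P+(1-\alpha)G_S$. Then any symmetrised Cheeger cut of $P$ maximises $S\mapsto\|A_\alpha(S)-\Pi\|_{F,\pi}^2$, and $$\max_{S\neq\mathcal{X},\emptyset}\|A_\alpha(S)-\Pi\|_{F,\pi}^2=\alpha^2\operatorname{Tr}(P^2)-2\alpha(1-\alpha)\phi^*(P)+1-2\alpha^2.$$
   Context: $S'=\mathcal{X}\setminus S$. $\pi$-reversible means $\pi(x)P(x,y)=\pi(y)P(y,x)$. The Gibbs kernel of a partition is $G(x,y)=\pi(y)/\pi(\mathcal{O}(x))$ if $y\in\mathcal{O}(x)$ and $0$ otherwise ($\mathcal{O}(x)$ the block containing $x$). $\Pi$ is the matrix with every row equal to $\pi$; $\|M\|_{F,\pi}^2=\operatorname{Tr}(M^*M)$ with $M^*(x,y)=\pi(y)M(y,x)/\pi(x)$. The symmetrised Cheeger constant is $\phi^*(P)=\min_{S:\,0<\pi(S)<1}\frac{\sum_{x\in S,y\in S'}\pi(x)P(x,y)}{\pi(S)\pi(S')}$, and a symmetrised Cheeger cut is any $S$ attaining this minimum. *)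

From mathcomp Require Import all_boot all_order all_algebra.
From mathcomp Require Import boolp classical_sets reals.
Set Implicit Arguments. Unset Strict Implicit. Unset Printing Implicit Defensive.
Import Order.TTheory GRing.Theory Num.Theory.
Local Open Scope ring_scope.

Section Defs.
Variables (R : realType) (n : nat).
Implicit Types (pi : 'I_n -> R) (P M : 'M[R]_n) (S : {set 'I_n}).

Definition pos_distr pi := (forall x, 0 < pi x) /\ \sum_x pi x = 1.

Definition stochastic P :=
  (forall x y, 0 <= P x y) /\ (forall x, \sum_y P x y = 1).

Definition reversible pi P := forall x y, pi x * P x y = pi y * P y x.

Definition piS pi S := \sum_(x in S) pi x.

Definition gibbs_kernel pi (Q : {set {set 'I_n}}) : 'M[R]_n :=
  \matrix_(x, y) (if y \in finset.pblock Q x then pi y / piS pi (finset.pblock Q x) else 0).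

Definition G_S pi S := gibbs_kernel pi [set S; ~: S].

Definition A_alpha pi P (alpha : R) S := alpha *: P + (1 - alpha) *: G_S pi S.

Definition Pi_mx pi : 'M[R]_n := \matrix_(x, y) pi y.

Definition adj_pi pi M : 'M[R]_n := \matrix_(x, y) (pi y * M y x / pi x).

Definition frob2 pi M := \tr (adj_pi pi M *m M).

Definition cheeger_adm pi S := 0 < piS pi S < 1.

Definition cheeger_ratio pi P S :=
  (\sum_(x in S) \sum_(y in ~: S) pi x * P x y) / (piS pi S * piS pi (~: S)).

Definition phi_star pi P : R :=
  inf [set cheeger_ratio pi P S | S in [set S | cheeger_adm pi S]].

Definition sym_cheeger_cut pi P S :=
  cheeger_adm pi S /\ cheeger_ratio pi P S = phi_star pi P.

End Defs.

From mathcomp Require Import boolp classical_sets reals.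
From mathcomp Require Import all_boot all_order all_algebra.
From mathcomp Require Import ring lra.

Set Implicit Arguments.
Unset Strict Implicit.
Unset Printing Implicit Defensive.

Import Order.TTheory GRing.Theory Num.Theory.
Local Open Scope ring_scope.

(* For a pi-reversible matrix M the pi-adjoint is M itself, so that
   ||M||_{F,pi}^2 = Tr(M^2).  Both P and the Gibbs kernel G_S are reversible
   and stochastic, hence absorb Pi on either side, and G_S is idempotent with
   trace 2.  Expanding A_alpha(S) - Pi = alpha (P - Pi) + (1 - alpha) (G_S - Pi)
   therefore leaves Tr(P G_S) as the only S-dependent term, and
   Tr(P G_S) = 2 - flow(S,S')/pi(S) - flow(S',S)/pi(S')
             = 2 - flow(S,S')/(pi(S) pi(S'))
   by reversibility and pi(S) + pi(S') = 1.  The norm is thus a decreasing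
   affine function of the Cheeger ratio of S, maximal exactly at the cuts. *)

Section Flow.
Variables (R : realType) (n : nat) (pi : 'I_n -> R).
Implicit Types (M : 'M[R]_n) (A B : {set 'I_n}).

Definition flow M A B := \sum_(x in A) \sum_(y in B) pi x * M x y.

Lemma sum_setC (F : 'I_n -> R) A :
  \sum_x F x = \sum_(x in A) F x + \sum_(x in ~: A) F x.
Proof.
rewrite (bigID (mem A)) /=; congr (_ + _).
by apply: eq_bigl => x; rewrite in_setC.
Qed.

Lemma flowC M A B : reversible pi M -> flow M A B = flow M B A.
Proof.
move=> revM; rewrite /flow exchange_big /=.
by apply: eq_bigr => y _; apply: eq_bigr => x _; rewrite revM.
Qed.

Lemma flow_diag M A : (forall x, \sum_y M x y = 1) ->
  flow M A A = piS pi A - flow M A (~: A).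
Proof.
move=> M1; rewrite /flow /piS -sumrB; apply: eq_bigr => x _.
by rewrite -{2}(mulr1 (pi x)) -(M1 x) mulr_sumr (sum_setC _ A) addrK.
Qed.

Lemma piS_setC A : \sum_x pi x = 1 -> piS pi A + piS pi (~: A) = 1.
Proof. by move=> pi1; rewrite /piS -sum_setC. Qed.

Lemma piS_gt0 A : (forall x, 0 < pi x) -> A != set0 -> 0 < piS pi A.
Proof.
move=> pi_gt0 /set0Pn[x xA]; rewrite /piS (bigD1 x) //=.
by rewrite ltr_pwDl // sumr_ge0 // => y _; apply: ltW.
Qed.

End Flow.

Section GibbsKernel.
Variables (R : realType) (n : nat) (pi : 'I_n -> R) (Q : {set {set 'I_n}}).
Hypothesis pi_gt0 : forall x, 0 < pi x.
Hypothesis partQ : partition Q [set: 'I_n].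

Local Notation G := (gibbs_kernel pi Q).
Local Notation blk := (pblock Q).

Lemma sum_pblocks (F : 'I_n -> R) :
  \sum_x F x = \sum_(B in Q) \sum_(x in B) F x.
Proof.
by rewrite -(set_partition_big _ partQ); apply: eq_bigl => x; rewrite in_setT.
Qed.

Lemma mem_pblockT x : x \in blk x.
Proof. by rewrite mem_pblock (cover_partition partQ) in_setT. Qed.

Lemma pblock_eq x y : y \in blk x -> blk y = blk x.
Proof. exact/same_pblock/(partition_trivIset partQ). Qed.

Lemma mem_pblockC x y : (y \in blk x) = (x \in blk y).
Proof. by apply/idP/idP => /pblock_eq ->; apply: mem_pblockT. Qed.

Lemma piS_pblock_gt0 x : 0 < piS pi (blk x).
Proof. by apply: piS_gt0 => //; apply/set0Pn; exists x; apply: mem_pblockT.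
Qed.

Lemma gibbs_kernelE x y :
  G x y = if y \in blk x then pi y / piS pi (blk x) else 0.
Proof. by rewrite mxE. Qed.

Lemma gibbs_kernel_colE x y :
  G y x = if y \in blk x then pi x / piS pi (blk x) else 0.
Proof.
by rewrite gibbs_kernelE -mem_pblockC; case: ifP => // /pblock_eq ->.
Qed.

Lemma gibbs_kernel_reversible : reversible pi G.
Proof.
move=> x y; rewrite gibbs_kernelE gibbs_kernel_colE.
by case: ifP => _; rewrite ?mulr0 // mulrCA.
Qed.

Lemma gibbs_kernel_row_sum x : \sum_y G x y = 1.
Proof.
under eq_bigr => y _ do rewrite gibbs_kernelE.
by rewrite -big_mkcond -mulr_suml mulfV // gt_eqF // piS_pblock_gt0.
Qed.

Lemma gibbs_kernel_idem : G *m G = G.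
Proof.
apply/matrixP => x y.
rewrite mxE -[RHS]mul1r -(gibbs_kernel_row_sum x) mulr_suml.
apply: eq_bigr => z _; have [zx|zx] := boolP (z \in blk x).
  by rewrite (gibbs_kernelE z) (gibbs_kernelE x y) (pblock_eq zx).
by rewrite gibbs_kernelE (negbTE zx) !mul0r.
Qed.

Lemma mxtrace_gibbs_kernel : \tr G = #|Q|%:R.
Proof.
rewrite /mxtrace sum_pblocks -sumr_const; apply: eq_bigr => B QB.
rewrite -[RHS](@mulfV _ (piS pi B)) ?mulr_suml; last first.
  by rewrite gt_eqF // piS_gt0 // (partition_neq0 partQ).
apply: eq_bigr => x xB; rewrite gibbs_kernelE mem_pblockT.
by rewrite (def_pblock (partition_trivIset partQ) QB xB).
Qed.

Lemma mxtrace_mul_gibbs_kernel (M : 'M[R]_n) :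
  \tr (M *m G) = \sum_(B in Q) flow pi M B B / piS pi B.
Proof.
rewrite /mxtrace sum_pblocks; apply: eq_bigr => B QB; rewrite /flow mulr_suml.
apply: eq_bigr => x xB; rewrite mxE mulr_suml [RHS]big_mkcond /=.
rewrite -(def_pblock (partition_trivIset partQ) QB xB).
apply: eq_bigr => z _; rewrite gibbs_kernel_colE.
by case: ifP; rewrite ?mulr0 // mulrA [M x z * _]mulrC.
Qed.

End GibbsKernel.

Section Frobenius.
Variables (R : realType) (n : nat) (pi : 'I_n -> R).
Hypothesis pi_gt0 : forall x, 0 < pi x.
Hypothesis pi_sum1 : \sum_x pi x = 1.
Implicit Types (M N : 'M[R]_n).

Local Notation Pi := (Pi_mx pi).

Lemma reversibleD M N :
  reversible pi M -> reversible pi N -> reversible pi (M + N).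
Proof. by move=> revM revN x y; rewrite !mxE !mulrDr revM revN. Qed.

Lemma reversibleN M : reversible pi M -> reversible pi (- M).
Proof. by move=> revM x y; rewrite !mxE !mulrN revM. Qed.

Lemma reversibleZ a M : reversible pi M -> reversible pi (a *: M).
Proof. by move=> revM x y; rewrite !mxE mulrCA revM mulrCA. Qed.

Lemma reversible_Pi : reversible pi Pi.
Proof. by move=> x y; rewrite !mxE mulrC. Qed.

Lemma Pi_row_sum x : \sum_y Pi x y = 1.
Proof. by rewrite -pi_sum1; apply: eq_bigr => y _; rewrite mxE. Qed.

Lemma mxtrace_Pi : \tr Pi = 1.
Proof. by rewrite -pi_sum1; apply: eq_bigr => x _; rewrite mxE. Qed.

Lemma adj_pi_reversible M : reversible pi M -> adj_pi pi M = M.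
Proof.
move=> revM; apply/matrixP => x y.
by rewrite mxE -revM mulrAC divff ?mul1r // gt_eqF.
Qed.

Lemma mulmx_Pi M : (forall x, \sum_y M x y = 1) -> M *m Pi = Pi.
Proof.
move=> M1; apply/matrixP => x y; rewrite !mxE.
under eq_bigr => z _ do rewrite mxE.
by rewrite -mulr_suml M1 mul1r.
Qed.

Lemma Pi_mulmx M :
  reversible pi M -> (forall x, \sum_y M x y = 1) -> Pi *m M = Pi.
Proof.
move=> revM M1; apply/matrixP => x y; rewrite !mxE.
under eq_bigr => z _ do rewrite mxE revM.
by rewrite -mulr_sumr M1 mulr1.
Qed.

Lemma mulmxBPi M N : M *m Pi = Pi -> Pi *m N = Pi ->
  (M - Pi) *m (N - Pi) = M *m N - Pi.
Proof.
move=> MPi PiN; rewrite mulmxBl !mulmxBr MPi PiN (mulmx_Pi Pi_row_sum).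
by rewrite subrr subr0.
Qed.

Lemma mxtrace_sqr_lincomb a b M N :
  \tr ((a *: M + b *: N) *m (a *: M + b *: N))
  = a ^+ 2 * \tr (M *m M) + 2 * a * b * \tr (M *m N) + b ^+ 2 * \tr (N *m N).
Proof.
rewrite mulmxDl !mulmxDr -!scalemxAl -!scalemxAr !mxtraceD !mxtraceZ.
rewrite (mxtrace_mulC N M); ring.
Qed.

Lemma frob2_gibbs_mix (P : 'M[R]_n) (Q : {set {set 'I_n}}) alpha :
  reversible pi P -> (forall x, \sum_y P x y = 1) ->
  partition Q [set: 'I_n] ->
  frob2 pi (alpha *: P + (1 - alpha) *: gibbs_kernel pi Q - Pi)
  = alpha ^+ 2 * (\tr (P *m P) - 1)
    + 2 * alpha * (1 - alpha) * (\tr (P *m gibbs_kernel pi Q) - 1)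
    + (1 - alpha) ^+ 2 * (#|Q|%:R - 1).
Proof.
move=> revP P1 partQ; set G := gibbs_kernel pi Q.
have revG : reversible pi G by apply: gibbs_kernel_reversible.
have G1 := gibbs_kernel_row_sum pi_gt0 partQ.
rewrite /frob2 adj_pi_reversible; last first.
  apply/reversibleD/reversibleN/reversible_Pi.
  by apply/reversibleD; apply/reversibleZ.
have -> : alpha *: P + (1 - alpha) *: G - Pi
          = alpha *: (P - Pi) + (1 - alpha) *: (G - Pi).
  by rewrite !scalerBr addrACA -opprD -scalerDl subrKC scale1r.
rewrite mxtrace_sqr_lincomb !mulmxBPi ?mulmx_Pi ?Pi_mulmx //.
by rewrite gibbs_kernel_idem // !linearB /= mxtrace_Pi mxtrace_gibbs_kernel.
Qed.

End Frobenius.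

Section TwoBlocks.
Variables (R : realType) (n : nat) (pi : 'I_n -> R) (P : 'M[R]_n).
Variable S : {set 'I_n}.
Hypothesis S_neq0 : S != set0.
Hypothesis S_neqT : S != [set: 'I_n].

Lemma setC_neq0 : ~: S != set0.
Proof.
by apply: contra S_neqT => /eqP SC0; rewrite -(setCK S) SC0 setC0.
Qed.

Lemma partition_setC : partition [set S; ~: S] [set: 'I_n].
Proof.
have part1 : partition [set ~: S] (~: S).
  by apply/and3P; rewrite cover1 trivIset1 in_set1 eq_sym setC_neq0.
rewrite -(setUCr S); apply: partitionU1 => //.
by rewrite disjoints_subset setCK subxx.
Qed.

Lemma set_neqC : S != ~: S.
Proof.
by case/set0Pn: S_neq0 => x xS; apply/eqP => /setP/(_ x); rewrite in_setC xS.
Qed.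

Lemma card_setC2 : #|[set S; ~: S]| = 2%N.
Proof. by rewrite cards2 set_neqC. Qed.

Hypothesis pi_gt0 : forall x, 0 < pi x.
Hypothesis pi_sum1 : \sum_x pi x = 1.
Hypothesis P_sum1 : forall x, \sum_y P x y = 1.
Hypothesis P_rev : reversible pi P.

Lemma mxtrace_mul_G_S : \tr (P *m G_S pi S) = 2 - cheeger_ratio pi P S.
Proof.
rewrite mxtrace_mul_gibbs_kernel //; last exact: partition_setC.
rewrite big_setU1 ?big_set1 ?in_set1 ?set_neqC //=.
rewrite !flow_diag // setCK [flow _ _ (~: S) S]flowC //.
rewrite /cheeger_ratio -/(flow pi P S (~: S)).
have := piS_setC S pi_sum1; have := piS_gt0 pi_gt0 setC_neq0.
have := piS_gt0 pi_gt0 S_neq0.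
set a := piS pi S; set b := piS pi (~: S) => a_gt0 b_gt0 ab1.
have -> : b = 1 - a by lra.
by field; rewrite !gt_eqF //; lra.
Qed.

Lemma frob2_A_alpha alpha :
  frob2 pi (A_alpha pi P alpha S - Pi_mx pi)
  = alpha ^+ 2 * \tr (P *m P) - 2 * alpha * (1 - alpha) * cheeger_ratio pi P S
    + 1 - 2 * alpha ^+ 2.
Proof.
rewrite /A_alpha frob2_gibbs_mix //; last exact: partition_setC.
by rewrite -/(G_S pi S) mxtrace_mul_G_S card_setC2; ring.
Qed.

End TwoBlocks.

Section CheegerCut.
Variables (R : realType) (n : nat) (pi : 'I_n -> R) (P : 'M[R]_n).

Lemma cheeger_adm_proper S : pos_distr pi ->
  cheeger_adm pi S <-> S != set0 /\ S != [set: 'I_n].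
Proof.
move=> [pi_gt0 pi_sum1]; have piSC := piS_setC S pi_sum1.
rewrite /cheeger_adm; split=> [/andP[S_gt0 S_lt1] | [S_neq0 S_neqT]].
  split; apply/eqP => SE.
    by move: S_gt0; rewrite SE /piS big_set0 ltxx.
  by move: piSC S_lt1; rewrite SE setCT /piS big_set0 addr0 => ->; rewrite ltxx.
have := piS_gt0 pi_gt0 (setC_neq0 S_neqT).
rewrite (piS_gt0 pi_gt0 S_neq0) /=; lra.
Qed.

Local Notation ratio := (cheeger_ratio pi P).

Lemma cheeger_ratio_has_lbound :
  has_lbound [set ratio S | S in [set S | cheeger_adm pi S]].
Proof.
exists (ratio [arg min_(S < set0) ratio S]%O) => _ [S _ <-].
by case: arg_minP => // S0 _; apply.
Qed.

Lemma sym_cheeger_cutP S0 : sym_cheeger_cut pi P S0 <->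
  cheeger_adm pi S0 /\ forall S, cheeger_adm pi S -> ratio S0 <= ratio S.
Proof.
split=> [[adm0 ->] | [adm0 min0]].
  by split=> // S admS; apply: (ge_inf cheeger_ratio_has_lbound); exists S.
split=> //; apply/eqP; rewrite eq_le (ge_inf cheeger_ratio_has_lbound) ?andbT.
  apply: lb_le_inf; first by exists (ratio S0), S0.
  by move=> _ [S admS <-]; apply: min0.
by exists S0.
Qed.

Lemma exists_sym_cheeger_cut :
  (exists S, cheeger_adm pi S) -> exists S0, sym_cheeger_cut pi P S0.
Proof.
case=> S admS; case: (arg_minP ratio admS) => S0 adm0 min0.
by exists S0; apply/sym_cheeger_cutP.
Qed.

End CheegerCut.

Lemma exists_proper_set n : (1 < n)%N ->
  exists S : {set 'I_n}, S != set0 /\ S != [set: 'I_n].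
Proof.
move=> n_gt1; pose x0 := Ordinal (ltnW n_gt1); pose x1 := Ordinal n_gt1.
exists [set x0]; split; first by apply/set0Pn; exists x0; rewrite set11.
by apply/eqP => /setP/(_ x1); rewrite !inE.
Qed.

Section CutMaximisesFrob2.
Variables (R : realType) (n : nat) (pi : 'I_n -> R) (P : 'M[R]_n) (alpha : R).
Hypothesis pi_distr : pos_distr pi.
Hypothesis P_sum1 : forall x, \sum_y P x y = 1.
Hypothesis P_rev : reversible pi P.
Hypothesis alpha_ge0 : 0 <= alpha.
Hypothesis alpha_le1 : alpha <= 1.

Local Notation frobA S := (frob2 pi (A_alpha pi P alpha S - Pi_mx pi)).

Lemma frob2_A_alpha_adm S : cheeger_adm pi S ->
  frobA S = alpha ^+ 2 * \tr (P *m P)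
            - 2 * alpha * (1 - alpha) * cheeger_ratio pi P S
            + 1 - 2 * alpha ^+ 2.
Proof.
case/(cheeger_adm_proper S pi_distr) => S_neq0 S_neqT.
by case: pi_distr => pi_gt0 pi_sum1; apply: frob2_A_alpha.
Qed.

Lemma sym_cheeger_cut_frob2_max S0 S : sym_cheeger_cut pi P S0 ->
  S != set0 -> S != [set: 'I_n] -> frobA S <= frobA S0.
Proof.
move=> /sym_cheeger_cutP[adm0 min0] S_neq0 S_neqT.
have admS : cheeger_adm pi S by apply/cheeger_adm_proper.
have c_ge0 : 0 <= 2 * alpha * (1 - alpha) by rewrite !mulr_ge0 ?subr_ge0.
have := ler_wpM2l c_ge0 (min0 S admS).
by rewrite !frob2_A_alpha_adm //; lra.
Qed.

End CutMaximisesFrob2.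

Theorem corollary4p6 (R : realType) (n : nat) (pi : 'I_n -> R) (P : 'M[R]_n)
    (alpha : R) :
  (1 < n)%N ->
  pos_distr pi -> stochastic P -> reversible pi P ->
  0 < alpha < 1 ->
  (forall S0, sym_cheeger_cut pi P S0 ->
     forall S : {set 'I_n}, S != finset.set0 -> S != [set: 'I_n] ->
       frob2 pi (A_alpha pi P alpha S - Pi_mx pi)
       <= frob2 pi (A_alpha pi P alpha S0 - Pi_mx pi)) /\
  (exists S0 : {set 'I_n}, [/\ S0 != finset.set0, S0 != [set: 'I_n],
     (forall S : {set 'I_n}, S != finset.set0 -> S != [set: 'I_n] ->
        frob2 pi (A_alpha pi P alpha S - Pi_mx pi)
        <= frob2 pi (A_alpha pi P alpha S0 - Pi_mx pi)) &
     frob2 pi (A_alpha pi P alpha S0 - Pi_mx pi)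
     = alpha ^+ 2 * \tr (P *m P) - 2 * alpha * (1 - alpha) * phi_star pi P
       + 1 - 2 * alpha ^+ 2]).
Proof.
move=> n_gt1 pi_distr [_ P_sum1] P_rev /andP[a_gt0 a_lt1].
have cut_max := @sym_cheeger_cut_frob2_max _ _ _ _ _ pi_distr P_sum1 P_rev
  (ltW a_gt0) (ltW a_lt1).
split=> [S0 cut0 S|]; first exact: cut_max S0 S cut0.
have [S0 cut0] : exists S0, sym_cheeger_cut pi P S0.
  apply: exists_sym_cheeger_cut; have [S S_proper] := exists_proper_set n_gt1.
  by exists S; apply/cheeger_adm_proper.
have [adm0 ratio0] := cut0.
have [S0_neq0 S0_neqT] := (cheeger_adm_proper S0 pi_distr).1 adm0.
exists S0; split=> //; first by move=> S; apply: cut_max S0 S cut0.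
by rewrite frob2_A_alpha_adm // ratio0.
Qed.
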